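(* Let $r\in\{2,3\}$, let $(\mathbf{a}_1,\mathbf{a}_2,\mathbf{a}_3)$ be $f$-tuples with entries in $\{0,\dots,p-1\}$ which are weakly generic, let $\tau$ be the corresponding non-principal-series tame type for $I_K$ and $(s_j)_{j=0}^{f-1}\in S_3^f$ an orientation of $(\mathbf{a}_1,\mathbf{a}_2,\mathbf{a}_3)$. For $0\le j\le f-1$ and $0\le i\le r-1$ define $s'_{j+if}=s_\tau^{\,i+1}\circ s_j\in S_3$, where $s_\tau=(23)$ if $r=2$ and $s_\tau=(123)$ if $r=3$. Then $(s'_{j'})_{j'=0}^{f'-1}\in S_3^{f'}$ is an orientation of $\tau'$.
   Context: $p>3$; $K=\mathbb{Q}_{p^f}$, $f'=fr$, $K'=\mathbb{Q}_{p^{f'}}$. $\omega_{f'}$ is a fundamental character of niveau $f'$ of $I_{K'}$ (viewed in $\mathcal{O}^\times$). For an $m$-tuple $\mathbf{b}=(b_i)_{i\in\mathbb{Z}/m}$ put $\mathbf{b}^{(j)}=\sum_{i=0}^{m-1}b_{-j+i}p^i$. The triple $(\mathbf{a}_1,\mathbf{a}_2,\mathbf{a}_3)$ is weakly generic if $3\le|a_{k,j}-a_{l,j}|\le p-4$ for all $k\ne l$, all $j$. The type $\tau$ is $\omega_{f'}^{-\mathbf{a}_1^{(0)}-p^f\mathbf{a}_1^{(0)}}\oplus\omega_{f'}^{-\mathbf{a}_2^{(0)}-p^f\mathbf{a}_3^{(0)}}\oplus\omega_{f'}^{-\mathbf{a}_3^{(0)}-p^f\mathbf{a}_2^{(0)}}$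 if $r=2$, and $\omega_{f'}^{-\mathbf{a}_1^{(0)}-p^f\mathbf{a}_2^{(0)}-p^{2f}\mathbf{a}_3^{(0)}}\oplus\omega_{f'}^{-\mathbf{a}_2^{(0)}-p^f\mathbf{a}_3^{(0)}-p^{2f}\mathbf{a}_1^{(0)}}\oplus\omega_{f'}^{-\mathbf{a}_3^{(0)}-p^f\mathbf{a}_1^{(0)}-p^{2f}\mathbf{a}_2^{(0)}}$ if $r=3$. Its restriction $\tau'$ to $I_{K'}$ is written uniquely as $\eta_1\oplus\eta_2\oplus\eta_3$ (in this order) with $\eta_k=\omega_{f'}^{-\mathbf{a}'^{(0)}_k}$ for $f'$-tuples $\mathbf{a}'_k$ with entries in $[0,p-1]$; an orientation of $\tau'$ means an orientation of $(\mathbf{a}'_1,\mathbf{a}'_2,\mathbf{a}'_3)$. An orientation of a triple of $m$-tuples $(\mathbf{b}_1,\mathbf{b}_2,\mathbf{b}_3)$ is $(t_j)\in S_3^m$ with $\mathbf{b}^{(j)}_{t_j(1)}\ge\mathbf{b}^{(j)}_{t_j(2)}\ge\mathbf{b}^{(j)}_{t_j(3)}$ for all $j$. Permutations compose right to left and $(123)$ is $1\mapsto2\mapsto3\mapsto1$. *)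

From mathcomp Require Import all_boot all_fingroup.
Set Implicit Arguments. Unset Strict Implicit. Unset Printing Implicit Defensive.
Local Open Scope group_scope.

(* Tuples b = (b_i)_{i in Z/m} are represented as b : nat -> nat, read at
   indices i %% m.  The paper's labels 1,2,3 are the ordinals 0,1,2 of 'I_3. *)

Definition bpow (p m : nat) (b : nat -> nat) (j : nat) : nat :=
  (\sum_(i < m) b ((i + (m - j %% m)) %% m) * p ^ i)%N.

Definition is_orientation (p m : nat) (B : 'I_3 -> nat -> nat)
    (t : nat -> {perm 'I_3}) : Prop :=
  forall j, (j < m)%N ->
    (bpow p m (B (t j ord0)) j >= bpow p m (B (t j (inord 1))) j)%N /\
    (bpow p m (B (t j (inord 1))) j >= bpow p m (B (t j (inord 2))) j)%N.

Definition absdiff (x y : nat) : nat := (maxn x y - minn x y)%N.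

Definition weakly_generic (p f : nat) (A : 'I_3 -> nat -> nat) : Prop :=
  forall (k l : 'I_3), k != l -> forall j, (j < f)%N ->
    (3 <= absdiff (A k j) (A l j) <= p - 4)%N.

(* exponent n_k with tau' = omega_{f'}^{-n_1} + omega_{f'}^{-n_2} + omega_{f'}^{-n_3} *)
Definition tau_exp (p f r : nat) (A : 'I_3 -> nat -> nat) (k : 'I_3) : nat :=
  let a := fun l : nat => bpow p f (A (inord l)) 0 in
  if r == 2 then
    match nat_of_ord k with
    | 0 => a 0 + p ^ f * a 0
    | 1 => a 1 + p ^ f * a 2
    | _ => a 2 + p ^ f * a 1
    end%N
  else
    match nat_of_ord k with
    | 0 => a 0 + p ^ f * a 1 + p ^ (2 * f) * a 2
    | 1 => a 1 + p ^ f * a 2 + p ^ (2 * f) * a 0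
    | _ => a 2 + p ^ f * a 0 + p ^ (2 * f) * a 1
    end%N.

(* a'_k: the f'-tuple of base-p digits of n_k, so that a'^{(0)}_k = n_k *)
Definition aprime (p f r : nat) (A : 'I_3 -> nat -> nat) (k : 'I_3) : nat -> nat :=
  fun i => ((tau_exp p f r A k %/ p ^ (i %% (f * r))) %% p)%N.

(* the 3-cycle (123): 1 -> 2 -> 3 -> 1, i.e. i |-> i+1 mod 3 on 'I_3 *)
Definition cyc123 : {perm 'I_3} := perm (@ordS_inj 3).
Definition swap23 : {perm 'I_3} := tperm (inord 1) (inord 2).
Definition s_tau (r : nat) : {perm 'I_3} := if r == 2 then swap23 else cyc123.

(* s'_{j+if} = s_tau^{i+1} o s_j.  In MathComp, (s * t) x = t (s x), so the
   composite "s_tau^{i+1} after s_j" is s_j * s_tau ^+ i.+1. *)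
Definition s_prime (f r : nat) (s : nat -> {perm 'I_3}) (j' : nat) : {perm 'I_3} :=
  s (j' %% f)%N * s_tau r ^+ (j' %/ f).+1.

(** The label order at position j' of tau' is read off the most significant
    base-p digit of the three numbers a'^{(j')}_k.  Writing j' = i f + j, that
    digit of a'_{s'_{j'}(x)} is the digit a_{s_j(x), f-1-j}: the exponent n_k
    of tau' is the concatenation of the blocks a^{(0)}_{s_tau^q(k)}, q < r,
    and s_tau^{r-1-i} undoes the twist s_tau^{i+1} because s_tau has order r.
    Weak genericity makes these top digits pairwise distinct, so the order of
    the a^{(j)} prescribed by (s_j) is the order of their top digits, which in
    turn forces the order of the a'^{(j')} prescribed by (s'_{j'}). *)

From mathcomp Require Import all_boot all_fingroup.
From mathcomp Require Import zify.

Definition digit (p n e : nat) : nat := (n %/ p ^ e) %% p.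

Section Digits.

Variable p : nat.

Lemma sum_digits_ltn n (g : nat -> nat) : (forall i, i < n -> g i < p) ->
  \sum_(i < n) g i * p ^ i < p ^ n.
Proof.
elim: n => [|n IHn] g_lt; first by rewrite big_ord0.
rewrite big_ord_recr /= expnS.
have := IHn (fun i lt_i_n => g_lt i (ltnW lt_i_n)).
have := g_lt n (ltnSn n).
set S := \sum_(i < n) _; set P := p ^ n; nia.
Qed.

Lemma sum_digits_ltn_top n (g h : nat -> nat) :
  (forall i, i < n -> g i < p) -> g n < h n ->
  \sum_(i < n.+1) g i * p ^ i < \sum_(i < n.+1) h i * p ^ i.
Proof.
move=> g_lt g_h; rewrite !big_ord_recr /=.
have := @sum_digits_ltn _ g g_lt.
set S := \sum_(i < n) g i * _; set T := \sum_(i < n) h i * _; set P := p ^ n; nia.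
Qed.

Hypothesis p_gt0 : 0 < p.

Lemma digit_addMexp f x y e : x < p ^ f ->
  digit p (x + p ^ f * y) e = if e < f then digit p x e else digit p y (e - f).
Proof.
move=> x_lt; rewrite /digit; case: ltnP => e_f.
- have -> : p ^ f = p ^ e * p * p ^ (f - e.+1) by rewrite -expnSr -expnD subnKC.
  rewrite -!mulnA [p ^ e * _]mulnC addnC divnMDl ?expn_gt0 ?p_gt0 //.
  by rewrite [p * _]mulnC modnMDl.
- have -> : p ^ e = p ^ f * p ^ (e - f) by rewrite -expnD subnKC.
  by rewrite divnMA addnC mulnC divnMDl ?expn_gt0 ?p_gt0 // (divn_small x_lt) addn0.
Qed.

Lemma digit_sum_digits n (g : nat -> nat) e : (forall i, i < n -> g i < p) ->
  e < n -> digit p (\sum_(i < n) g i * p ^ i) e = g e.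
Proof.
elim: n => // n IHn g_lt e_n.
rewrite big_ord_recr /= mulnC digit_addMexp; last first.
  by apply: sum_digits_ltn => i lt_i_n; apply: g_lt; lia.
case: ltnP => [e_lt|e_ge]; first by apply: IHn => // i lt_i_n; apply: g_lt; lia.
have -> : e = n by lia.
by rewrite subnn /digit expn0 divn1 modn_small // g_lt.
Qed.

Lemma digit_block_sum f r (x : nat -> nat) q e :
  (forall i, i < r -> x i < p ^ f) -> q < r -> e < f ->
  digit p (\sum_(i < r) p ^ (i * f) * x i) (q * f + e) = digit p (x q) e.
Proof.
elim: r x q => // r IHr x q x_lt q_r e_f.
rewrite big_ord_recl /= mul0n expn0 mul1n.
under eq_bigr do rewrite /bump /= add1n mulSn expnD -mulnA.
rewrite -big_distrr /= digit_addMexp ?x_lt //.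
case: q q_r => [|q] q_r; first by rewrite mul0n add0n e_f.
rewrite mulSn -addnA ifN -?leqNgt ?leq_addr // addKn.
by apply: (IHr (fun i => x i.+1)) => // i lt_i_r; apply: x_lt.
Qed.

End Digits.

Section Rotations.

Variables (p m : nat) (b : nat -> nat).
Hypothesis b_lt : forall i, i < m -> b i < p.

Lemma bpow0E : bpow p m b 0 = \sum_(i < m) b i * p ^ i.
Proof.
by rewrite /bpow mod0n subn0; apply: eq_bigr => i _; rewrite modnDr modn_small.
Qed.

Lemma bpow0_ltn : bpow p m b 0 < p ^ m.
Proof. by rewrite bpow0E; apply: sum_digits_ltn b_lt. Qed.

Lemma digit_bpow0 e : e < m -> digit p (bpow p m b 0) e = b e.
Proof.
move=> e_m; have p_gt0 : 0 < p := leq_ltn_trans (leq0n _) (b_lt _ e_m).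
by rewrite bpow0E; apply: digit_sum_digits.
Qed.

(* The most significant digit of b^{(j)} is b_{m-1-j}. *)
Lemma bpow_ltn_top (c : nat -> nat) j : j < m ->
  b (m.-1 - j) < c (m.-1 - j) -> bpow p m b j < bpow p m c j.
Proof.
move=> j_m b_c; rewrite /bpow (modn_small j_m).
case: m j_m b_lt b_c => // n j_m b_lt' b_c.
apply: (@sum_digits_ltn_top p n (fun i => b ((i + (n.+1 - j)) %% n.+1))
                                (fun i => c ((i + (n.+1 - j)) %% n.+1))) => [i _|] /=.
  by rewrite b_lt' // ltn_mod.
have -> : (n + (n.+1 - j)) %% n.+1 = n - j.
  have -> : n + (n.+1 - j) = n - j + n.+1 by lia.
  by rewrite modnDr modn_small //; lia.
exact: b_c.
Qed.

Lemma bpow_leq_top_ltn (c : nat -> nat) j : j < m ->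
  b (m.-1 - j) != c (m.-1 - j) -> bpow p m c j <= bpow p m b j ->
  c (m.-1 - j) < b (m.-1 - j).
Proof.
move=> j_m b_neq_c c_le_b; case: ltngtP b_neq_c => // b_c _.
by have := bpow_ltn_top _ _ j_m b_c; rewrite ltnNge c_le_b.
Qed.

End Rotations.

Lemma weakly_generic_neq p f A (k l : 'I_3) j : weakly_generic p f A ->
  k != l -> j < f -> A k j != A l j.
Proof.
move=> gen k_l j_f; apply: contraTneq (gen k l k_l j j_f) => ->.
by rewrite /absdiff maxnn minnn subnn.
Qed.

Lemma cyc123_expE n (k : 'I_3) : val ((cyc123 ^+ n)%g k) = (k + n) %% 3.
Proof.
elim: n => [|n IHn]; first by rewrite expg0 perm1 addn0 modn_small.
by rewrite expgSr permM permE /= IHn -addn1 modnDml -addnA addn1.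
Qed.

Lemma swap23E (k : 'I_3) : val (swap23 k) = (3 - k) %% 3.
Proof.
rewrite /swap23 -[k]inord_val; case: k => [[|[|[|//]]] k3] /=.
- by rewrite tpermD ?inordK // -(inj_eq val_inj) /= !inordK.
- by rewrite tpermL !inordK.
- by rewrite tpermR !inordK.
Qed.

Lemma s_tau_order (r : nat) : (r == 2) || (r == 3) -> (s_tau r ^+ r = 1)%g.
Proof.
case/orP => /eqP->; rewrite /s_tau /=; first by rewrite expgS expg1 tperm2.
by apply/permP => k; apply/val_inj; rewrite cyc123_expE perm1 /= modnDr modn_small.
Qed.

Lemma tau_exp_blocks (p f r : nat) A (k : 'I_3) : (r == 2) || (r == 3) ->
  tau_exp p f r A k =
  \sum_(q < r) p ^ (q * f) * bpow p f (A ((s_tau r ^+ q)%g k)) 0.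
Proof.
case/orP => /eqP->; rewrite /tau_exp /s_tau /= !big_ord_recr big_ord0 /=.
- rewrite -[(swap23 ^+ 0)%g k]inord_val -[(swap23 ^+ 1)%g k]inord_val.
  rewrite expg0 expg1 perm1 swap23E mul0n mul1n expn0 add0n.
  by case: k => [[|[|[|//]]] k3]; rewrite /= mul1n.
- rewrite -[(cyc123 ^+ 0)%g k]inord_val -[(cyc123 ^+ 1)%g k]inord_val.
  rewrite -[(cyc123 ^+ 2)%g k]inord_val !cyc123_expE mul0n mul1n expn0 add0n.
  by case: k => [[|[|[|//]]] k3]; rewrite /= mul1n.
Qed.

Lemma s_prime_untwist (f r : nat) s j' (x : 'I_3) :
  (r == 2) || (r == 3) -> j' %/ f < r ->
  (s_tau r ^+ (r.-1 - j' %/ f))%g (s_prime f r s j' x) = s (j' %% f) x.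
Proof.
move=> r23 i_r; rewrite /s_prime -permM -mulgA -expgD.
have -> : (j' %/ f).+1 + (r.-1 - j' %/ f) = r by lia.
by rewrite s_tau_order // mulg1.
Qed.

Lemma aprime_top (p f r : nat) A s j' (x : 'I_3) :
  0 < p -> (r == 2) || (r == 3) -> (forall k j, j < f -> A k j < p) -> j' < f * r ->
  aprime p f r A (s_prime f r s j' x) ((f * r).-1 - j') =
  A (s (j' %% f) x) (f.-1 - j' %% f).
Proof.
move=> p_gt0 r23 A_lt j'_fr.
have f_gt0 : 0 < f by nia.
have i_r : j' %/ f < r by rewrite ltn_divLR // mulnC.
have j_f : j' %% f < f by rewrite ltn_mod.
have predB_ltn n k : 0 < n -> n.-1 - k < n by lia.
rewrite /aprime (@modn_small ((f * r).-1 - j')); last by lia.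
have -> : (f * r).-1 - j' = (r.-1 - j' %/ f) * f + (f.-1 - j' %% f).
  move: (divn_eq j' f) i_r j_f j'_fr; move: (j' %/ f) (j' %% f) => i j ->.
  by case/orP: r23 => /eqP-> {r}; nia.
rewrite -/(digit _ _ _) tau_exp_blocks //.
rewrite (@digit_block_sum p p_gt0 f r
           (fun q => bpow p f (A ((s_tau r ^+ q)%g (s_prime f r s j' x))) 0)) /=.
- by rewrite digit_bpow0 ?s_prime_untwist // => [i|]; [apply: A_lt | exact: predB_ltn].
- by move=> q _; apply: bpow0_ltn => i; apply: A_lt.
- exact: predB_ltn (leq_ltn_trans (leq0n _) i_r).
- exact: predB_ltn.
Qed.

Lemma s_prime_orientation_step (p f r : nat) A (s : nat -> {perm 'I_3}) j'
    (x y : 'I_3) :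
  0 < p -> (r == 2) || (r == 3) -> (forall k j, j < f -> A k j < p) ->
  weakly_generic p f A -> j' < f * r -> x != y ->
  bpow p f (A (s (j' %% f) y)) (j' %% f) <= bpow p f (A (s (j' %% f) x)) (j' %% f) ->
  bpow p (f * r) (aprime p f r A (s_prime f r s j' y)) j' <=
  bpow p (f * r) (aprime p f r A (s_prime f r s j' x)) j'.
Proof.
move=> p_gt0 r23 A_lt gen j'_fr x_y le_yx.
have f_gt0 : 0 < f by nia.
have j_f : j' %% f < f by rewrite ltn_mod.
apply/ltnW/bpow_ltn_top => // [i _|]; first by rewrite /aprime ltn_mod.
rewrite !aprime_top //; apply: bpow_leq_top_ltn le_yx => //; first by move=> i; apply: A_lt.
apply: weakly_generic_neq gen _ _; first by rewrite (inj_eq perm_inj).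
by rewrite (leq_ltn_trans (leq_subr _ _)) // ltn_predL.
Qed.

Theorem proposition6p1 (p f r : nat) (A : 'I_3 -> nat -> nat)
    (s : nat -> {perm 'I_3}) :
  prime p -> (3 < p)%N -> (0 < f)%N -> ((r == 2) || (r == 3)) ->
  (forall (k : 'I_3) j, (j < f)%N -> (A k j < p)%N) ->
  weakly_generic p f A ->
  is_orientation p f A s ->
  is_orientation p (f * r) (aprime p f r A) (s_prime f r s).
Proof.
move=> /prime_gt0 p_gt0 _ f_gt0 r23 A_lt gen orient j' j'_fr.
have [le_10 le_21] := orient _ (ltn_pmod j' f_gt0).
split; apply: s_prime_orientation_step => //.
- by rewrite -(inj_eq val_inj) /= inordK.
- by rewrite -(inj_eq val_inj) /= !inordK.
Qed.
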